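(* There is a constant $c>1$ such that for all $t\in[0,1]$, on $C_0\setminus\mathrm{Sing}(C_0)$, $$\tfrac1c\,\omega_{FS}|_{C_0}\le(\mathcal{F}_t^*\omega_{FS})|_{C_0}\le c\,\omega_{FS}|_{C_0}.$$ In particular $\omega_{FS}$ restricts to a symplectic form on $C_t\setminus\mathrm{Sing}(C_t)$ for every $t\in[0,1]$.
   Context: On $\mathbb{CP}^2$ with homogeneous coordinates $[z_0,z_1,z_2]$, use affine coordinates $x_k=z_k/z_0=r_ke^{i\theta_k}$ ($k=1,2$); $\omega_{FS}=i\partial\bar\partial\log(1+|x_1|^2+|x_2|^2)$ is the Fubini–Study Kähler form. $C_0$ is the line $\{z_0+z_1+z_2=0\}$ (in affine coordinates $x_1+x_2+1=0$). For $t\in[0,1]$, $\mathcal{F}_t(x_1,x_2)=\Big(\big(\tfrac{\max(1,r_2)}{\max(r_1,r_2)}\big)^tx_1,\big(\tfrac{\max(1,r_1)}{\max(r_1,r_2)}\big)^tx_2\Big)$ (extended continuously to $\mathbb{CP}^2$), $C_t=\mathcal{F}_t(C_0)$, and $\mathrm{Sing}(C_t)=\{x\in C_t:(r_1-1)(r_2-1)(r_1-r_2)=0\}$; $\mathcal{F}_t$ is smooth on $C_0\setminus\mathrm{Sing}(C_0)$. *)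

From Stdlib Require Import Reals.
From Coquelicot Require Import Coquelicot.
Open Scope R_scope.

(* A point of the affine chart {z0 <> 0} of CP^2: (x1, x2) in C^2.
   A (real) tangent vector at such a point is also an element of C^2. *)
Definition pt := (C * C)%type.

(* Fubini-Study form  omega_FS = i d dbar log(1+|x1|^2+|x2|^2)
   = i sum_{j,k} h_{j kbar} dx_j /\ dxbar_k,
   h_{j kbar} = (N delta_jk - xbar_j x_k) / N^2,  N = 1+|x1|^2+|x2|^2,
   evaluated on real tangent vectors X, Y (with (a/\b)(X,Y) = a(X)b(Y)-a(Y)b(X)):
   omega(X,Y) = i (A - conj A) = -2 Im A,  A = sum_{j,k} h_{j kbar} X_j conj(Y_k). *)
Definition omegaFS (p X Y : pt) : R :=
  let x1 := fst p in let x2 := snd p in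
  let N := 1 + Cmod x1 ^ 2 + Cmod x2 ^ 2 in
  let h (xj xk : C) (d : R) : C :=
    Cmult (RtoC (/ (N ^ 2))) (Cminus (RtoC (N * d)) (Cmult (Cconj xj) xk)) in
  let term (hjk Xj Yk : C) : C := Cmult hjk (Cmult Xj (Cconj Yk)) in
  let A := Cplus (Cplus (term (h x1 x1 1) (fst X) (fst Y))
                        (term (h x1 x2 0) (fst X) (snd Y)))
                 (Cplus (term (h x2 x1 0) (snd X) (fst Y))
                        (term (h x2 x2 1) (snd X) (snd Y))) in
  -2 * Im A.

Definition Ft (t : R) (p : pt) : pt :=
  let r1 := Cmod (fst p) in let r2 := Cmod (snd p) in
  (Cmult (RtoC (Rpower (Rmax 1 r2 / Rmax r1 r2) t)) (fst p),
   Cmult (RtoC (Rpower (Rmax 1 r1 / Rmax r1 r2) t)) (snd p)).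

(* Real-linear parametrization of the affine part of C_0 = {x1 + x2 + 1 = 0}
   by w = u + i v :  (x1, x2) = (-1 - w, w). *)
Definition phi0 (u v : R) : pt := ((-1 - u, - v), (u, v)).

(* (x1,x2) is not in Sing: (r1-1)(r2-1)(r1-r2) <> 0. *)
Definition nonsing (p : pt) : Prop :=
  (Cmod (fst p) - 1) * (Cmod (snd p) - 1) * (Cmod (fst p) - Cmod (snd p)) <> 0.

Definition dC (f : R -> C) (s : R) : C :=
  (Derive (fun s => fst (f s)) s, Derive (fun s => snd (f s)) s).
Definition dpt (f : R -> pt) (s : R) : pt :=
  (dC (fun s => fst (f s)) s, dC (fun s => snd (f s)) s).

(* Coefficient of Psi^* omega_FS with respect to du /\ dv at (u,v),
   for a map Psi : R^2 -> C^2:  omega_FS(dPsi(d/du), dPsi(d/dv)). *)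
Definition pullback_coeff (Psi : R -> R -> pt) (u v : R) : R :=
  omegaFS (Psi u v) (dpt (fun s => Psi s v) u) (dpt (fun s => Psi u s) v).

(* Away from Sing(C_0), i.e. off the circles |x1| = 1, |x2| = 1 and |x1| = |x2|,
   the order of 1, |x1|, |x2| is locally constant, so each scaling factor of F_t
   is locally a monomial |x1|^a |x2|^b with exponents in {0, -t, t}.  Near such a
   point F_t is the map (x1, x2) |-> (g1 x1, g2 x2) with g1, g2 monomials, and
   the pullback of omega_FS to C_0 has an explicit density in P1 = |x1|^2,
   P2 = |x2|^2 and the exponents.  In each of the six chambers the factors g_i^2
   lie between 1 and the ratio of squared moduli defining the chamber, which
   keeps this density within a factor 12 of the density 6 / (1 + P1 + P2)^2 of
   omega_FS itself.  The swap x1 <-> x2 (w |-> -1 - w) exchanges the chambers in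
   pairs, so three estimates suffice. *)

From Stdlib Require Import Reals Lra.
From Coquelicot Require Import Coquelicot.
Open Scope R_scope.

Definition P1 (u v : R) : R := (-1 - u) ^ 2 + (-v) ^ 2.
Definition P2 (u v : R) : R := u ^ 2 + v ^ 2.

Lemma P1_nonneg (u v : R) : 0 <= P1 u v.
Proof. unfold P1; apply Rplus_le_le_0_compat; apply pow2_ge_0. Qed.

Lemma P2_nonneg (u v : R) : 0 <= P2 u v.
Proof. unfold P2; apply Rplus_le_le_0_compat; apply pow2_ge_0. Qed.

Lemma P1_eq (u v : R) : P1 u v = P2 u v + 2 * u + 1.
Proof. unfold P1, P2; ring. Qed.

Lemma P2_eq (u v : R) : P2 u v = P1 u v + 2 * (-1 - u) + 1.
Proof. unfold P1, P2; ring. Qed.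

Lemma sqr_le_P1 (u v : R) : (-1 - u) ^ 2 <= P1 u v.
Proof. unfold P1; pose proof (pow2_ge_0 (-v)); lra. Qed.

Lemma sqr_le_P2 (u v : R) : u ^ 2 <= P2 u v.
Proof. unfold P2; pose proof (pow2_ge_0 v); lra. Qed.

Lemma P1_pos (u v : R) : P2 u v <> 1 -> 0 < P1 u v.
Proof.
  intros H2; destruct (Rlt_or_le 0 (P1 u v)) as [|H1]; [assumption|].
  exfalso; apply H2; pose proof (sqr_le_P1 u v); rewrite P2_eq; nra.
Qed.

Lemma P2_pos (u v : R) : P1 u v <> 1 -> 0 < P2 u v.
Proof.
  intros H1; destruct (Rlt_or_le 0 (P2 u v)) as [|H2]; [assumption|].
  exfalso; apply H1; pose proof (sqr_le_P2 u v); rewrite P1_eq; nra.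
Qed.

Lemma Rmax_P1_P2_pos (u v : R) : 0 < Rmax (P1 u v) (P2 u v).
Proof.
  pose proof (Rmax_l (P1 u v) (P2 u v)); pose proof (Rmax_r (P1 u v) (P2 u v)).
  unfold P1, P2 in *; nra.
Qed.

Lemma nonsing_phi0 (u v : R) :
  nonsing (phi0 u v) -> P1 u v <> 1 /\ P2 u v <> 1 /\ P1 u v <> P2 u v.
Proof.
  unfold nonsing; change (Cmod (fst (phi0 u v))) with (sqrt (P1 u v));
    change (Cmod (snd (phi0 u v))) with (sqrt (P2 u v)).
  intros Hn; repeat split; intros E; apply Hn; rewrite E; rewrite ?sqrt_1; ring.
Qed.

Lemma is_derive_P1_u (u v : R) : is_derive (fun s => P1 s v) u (2 * (1 + u)).
Proof. unfold P1; auto_derive; [easy | ring]. Qed.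

Lemma is_derive_P1_v (u v : R) : is_derive (fun s => P1 u s) v (2 * v).
Proof. unfold P1; auto_derive; [easy | ring]. Qed.

Lemma is_derive_P2_u (u v : R) : is_derive (fun s => P2 s v) u (2 * u).
Proof. unfold P2; auto_derive; [easy | ring]. Qed.

Lemma is_derive_P2_v (u v : R) : is_derive (fun s => P2 u s) v (2 * v).
Proof. unfold P2; auto_derive; [easy | ring]. Qed.

(** * Locality of [pullback_coeff] *)

(* [pullback_coeff] only sees [Psi] along the two coordinate lines through (u, v). *)
Definition near_axes (Q : R -> R -> Prop) (u v : R) : Prop :=
  locally u (fun a => Q a v) /\ locally v (fun b => Q u b).

Lemma near_axes_imp (Q Q' : R -> R -> Prop) (u v : R) :
  (forall a b, Q a b -> Q' a b) -> near_axes Q u v -> near_axes Q' u v.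
Proof. intros H [Hu Hv]; split; [revert Hu | revert Hv]; apply filter_imp; auto. Qed.

Lemma near_axes_and (Q Q' : R -> R -> Prop) (u v : R) :
  near_axes Q u v -> near_axes Q' u v -> near_axes (fun a b => Q a b /\ Q' a b) u v.
Proof. intros [Hu Hv] [Hu' Hv']; split; apply filter_and; assumption. Qed.

Lemma dpt_ext_loc (f g : R -> pt) (x : R) :
  locally x (fun s => f s = g s) -> dpt f x = dpt g x.
Proof.
  intros H; unfold dpt, dC; f_equal; f_equal; apply Derive_ext_loc;
    revert H; apply filter_imp; intros s ->; reflexivity.
Qed.

Lemma pullback_coeff_ext_near (Psi Psi' : R -> R -> pt) (u v : R) :
  near_axes (fun a b => Psi a b = Psi' a b) u v ->
  pullback_coeff Psi u v = pullback_coeff Psi' u v.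
Proof.
  intros [Hu Hv]; unfold pullback_coeff.
  rewrite (locally_singleton _ _ Hu),
    (dpt_ext_loc (fun a => Psi a v) (fun a => Psi' a v) u Hu),
    (dpt_ext_loc (fun b => Psi u b) (fun b => Psi' u b) v Hv).
  reflexivity.
Qed.

Definition axis_continuous (f : R -> R -> R) : Prop :=
  forall u v, continuous (fun s => f s v) u /\ continuous (fun s => f u s) v.

Lemma axis_continuous_const (c : R) : axis_continuous (fun _ _ => c).
Proof. intros u v; split; apply continuous_const. Qed.

Lemma axis_continuous_P1 : axis_continuous P1.
Proof.
  intros u v; split; apply (ex_derive_continuous (K := R_AbsRing) (V := R_NormedModule));
    eexists; [apply is_derive_P1_u | apply is_derive_P1_v].
Qed.

Lemma axis_continuous_P2 : axis_continuous P2.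
Proof.
  intros u v; split; apply (ex_derive_continuous (K := R_AbsRing) (V := R_NormedModule));
    eexists; [apply is_derive_P2_u | apply is_derive_P2_v].
Qed.

Lemma locally_lt (f g : R -> R) (x : R) :
  continuous f x -> continuous g x -> f x < g x -> locally x (fun s => f s < g s).
Proof.
  intros Hf Hg H.
  assert (Hd := continuous_minus g f x Hg Hf).
  apply (filter_imp (fun s => 0 < minus (g s) (f s))).
  - intros s; unfold minus, plus, opp; simpl; lra.
  - apply Hd, open_gt; unfold minus, plus, opp; simpl; lra.
Qed.

Lemma near_axes_lt (f g : R -> R -> R) (u v : R) :
  axis_continuous f -> axis_continuous g -> f u v < g u v ->
  near_axes (fun a b => f a b < g a b) u v.
Proof.
  intros Hf Hg H; destruct (Hf u v), (Hg u v); split; apply locally_lt; assumption.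
Qed.

Lemma near_axes_lt_chain (f g h : R -> R -> R) (u v : R) :
  axis_continuous f -> axis_continuous g -> axis_continuous h ->
  f u v < g u v < h u v -> near_axes (fun a b => f a b < g a b < h a b) u v.
Proof.
  intros Hf Hg Hh [H1 H2]; apply near_axes_and; apply near_axes_lt; assumption.
Qed.

(** * Pullback of omega_FS by monomial rescalings *)

Definition rescaled (g1 g2 : R -> R -> R) (u v : R) : pt :=
  ((g1 u v * (-1 - u), g1 u v * (-v)), (g2 u v * u, g2 u v * v)).

Lemma Cmod_sqr (z : C) : Cmod z ^ 2 = fst z ^ 2 + snd z ^ 2.
Proof.
  unfold Cmod. rewrite pow2_sqrt; [reflexivity|].
  destruct z; simpl; nra.
Qed.

Lemma Derive_mult_of_is_derive (f h : R -> R) (x df dh : R) :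
  is_derive f x df -> is_derive h x dh ->
  Derive (fun s => f s * h s) x = df * h x + f x * dh.
Proof.
  intros Hf Hh. apply is_derive_unique.
  eapply is_derive_ext; [|apply (is_derive_mult f h x df dh Hf Hh)]; [reflexivity|].
  intros; simpl; unfold mult; simpl; ring.
Qed.

Lemma pullback_coeff_rescaled (g1 g2 : R -> R -> R) (u v g1u g1v g2u g2v : R) :
  is_derive (fun s => g1 s v) u g1u -> is_derive (fun s => g1 u s) v g1v ->
  is_derive (fun s => g2 s v) u g2u -> is_derive (fun s => g2 u s) v g2v ->
  pullback_coeff (rescaled g1 g2) u v =
  omegaFS (rescaled g1 g2 u v)
    ((g1u * (-1 - u) - g1 u v, g1u * (-v)), (g2u * u + g2 u v, g2u * v))
    ((g1v * (-1 - u), g1v * (-v) - g1 u v), (g2v * u, g2v * v + g2 u v)).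
Proof.
  intros H1u H1v H2u H2v.
  unfold pullback_coeff, dpt, dC, rescaled; cbn [fst snd].
  rewrite (Derive_mult_of_is_derive _ (fun s => -1 - s) _ _ (-1) H1u),
    (Derive_mult_of_is_derive _ (fun _ => -v) _ _ 0 H1u),
    (Derive_mult_of_is_derive _ (fun s => s) _ _ 1 H2u),
    (Derive_mult_of_is_derive _ (fun _ => v) _ _ 0 H2u),
    (Derive_mult_of_is_derive _ (fun _ => -1 - u) _ _ 0 H1v),
    (Derive_mult_of_is_derive _ (fun s => - s) _ _ (-1) H1v),
    (Derive_mult_of_is_derive _ (fun _ => u) _ _ 0 H2v),
    (Derive_mult_of_is_derive _ (fun s => s) _ _ 1 H2v)
    by (auto_derive; auto; ring).
  f_equal; f_equal; f_equal; ring.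
Qed.

Definition monomial (a b u v : R) : R := exp (a * ln (P1 u v) + b * ln (P2 u v)).

Definition fs_density (p1 p2 u g1 g2 a1 b1 a2 b2 : R) : R :=
  2 / (1 + g1 ^ 2 * p1 + g2 ^ 2 * p2) ^ 2 *
  (g1 ^ 2 * (1 + 2 * a1 + 2 * b1 * (u + p2) / p2)
   + g2 ^ 2 * (1 + 2 * b2 + 2 * a2 * (u + p2) / p1)
   + g1 ^ 2 * g2 ^ 2 * (1 - 2 * u * (a1 - a2) - 2 * (1 + u) * (b1 - b2))).

Lemma is_derive_monomial_u (a b u v : R) : 0 < P1 u v -> 0 < P2 u v ->
  is_derive (fun s => monomial a b s v) u
    (monomial a b u v * (2 * a * (1 + u) / P1 u v + 2 * b * u / P2 u v)).
Proof.
  intros H1 H2; unfold monomial; auto_derive.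
  - repeat split; auto; eexists; [apply is_derive_P1_u | apply is_derive_P2_u].
  - replace (Derive (fun s => P1 s v) u) with (2 * (1 + u))
      by (symmetry; apply is_derive_unique, is_derive_P1_u).
    replace (Derive (fun s => P2 s v) u) with (2 * u)
      by (symmetry; apply is_derive_unique, is_derive_P2_u).
    field; lra.
Qed.

Lemma is_derive_monomial_v (a b u v : R) : 0 < P1 u v -> 0 < P2 u v ->
  is_derive (fun s => monomial a b u s) v
    (monomial a b u v * (2 * a * v / P1 u v + 2 * b * v / P2 u v)).
Proof.
  intros H1 H2; unfold monomial; auto_derive.
  - repeat split; auto; eexists; [apply is_derive_P1_v | apply is_derive_P2_v].
  - replace (Derive (fun s => P1 u s) v) with (2 * v)
      by (symmetry; apply is_derive_unique, is_derive_P1_v).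
    replace (Derive (fun s => P2 u s) v) with (2 * v)
      by (symmetry; apply is_derive_unique, is_derive_P2_v).
    field; lra.
Qed.

Lemma pullback_coeff_rescaled_monomial (a1 b1 a2 b2 u v : R) :
  0 < P1 u v -> 0 < P2 u v ->
  pullback_coeff (rescaled (monomial a1 b1) (monomial a2 b2)) u v =
  fs_density (P1 u v) (P2 u v) u (monomial a1 b1 u v) (monomial a2 b2 u v) a1 b1 a2 b2.
Proof.
  intros H1 H2.
  rewrite (pullback_coeff_rescaled _ _ _ _ _ _ _ _
    (is_derive_monomial_u a1 b1 u v H1 H2) (is_derive_monomial_v a1 b1 u v H1 H2)
    (is_derive_monomial_u a2 b2 u v H1 H2) (is_derive_monomial_v a2 b2 u v H1 H2)).
  unfold rescaled.
  generalize (monomial a1 b1 u v) (monomial a2 b2 u v); intros g1 g2.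
  unfold omegaFS, fs_density; rewrite !Cmod_sqr.
  unfold Cmult, Cminus, Cplus, Copp, Cconj, RtoC, Im; cbn [fst snd].
  unfold P1, P2 in *. field.
  pose proof (pow2_ge_0 g1); pose proof (pow2_ge_0 g2).
  repeat split; nra.
Qed.

Lemma monomial_0 (u v : R) : monomial 0 0 u v = 1.
Proof. unfold monomial; rewrite !Rmult_0_l, Rplus_0_r; apply exp_0. Qed.

Lemma phi0_rescaled (a b : R) : phi0 a b = rescaled (monomial 0 0) (monomial 0 0) a b.
Proof. unfold phi0, rescaled; rewrite monomial_0; f_equal; f_equal; ring. Qed.

Lemma pullback_coeff_phi0 (u v : R) : 0 < P1 u v -> 0 < P2 u v ->
  pullback_coeff phi0 u v = 6 / (1 + P1 u v + P2 u v) ^ 2.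
Proof.
  intros H1 H2.
  rewrite (pullback_coeff_ext_near _ (rescaled (monomial 0 0) (monomial 0 0))).
  - rewrite pullback_coeff_rescaled_monomial, monomial_0 by assumption.
    unfold fs_density; field; lra.
  - split; apply filter_forall; intros; apply phi0_rescaled.
Qed.

Lemma pullback_coeff_phi0_pos (u v : R) : nonsing (phi0 u v) -> 0 < pullback_coeff phi0 u v.
Proof.
  intros Hn; destruct (nonsing_phi0 u v Hn) as (n1 & n2 & _).
  pose proof (P1_pos u v n2); pose proof (P2_pos u v n1).
  rewrite pullback_coeff_phi0 by assumption.
  apply Rdiv_lt_0_compat; [lra | apply pow_lt; lra].
Qed.

(** * F_t on the chambers *)

Definition Ft_scale (t p q : R) : R := exp (t / 2 * (ln (Rmax 1 q) - ln (Rmax p q))).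

Lemma Rmax_sqrt (x y : R) : 0 <= x -> 0 <= y -> Rmax (sqrt x) (sqrt y) = sqrt (Rmax x y).
Proof.
  intros Hx Hy; destruct (Rle_dec x y).
  - rewrite !Rmax_right; auto; apply sqrt_le_1_alt; lra.
  - rewrite !Rmax_left; try lra; apply sqrt_le_1_alt; lra.
Qed.

Lemma Rpower_sqrt_div (x y t : R) : 0 < x -> 0 < y ->
  Rpower (sqrt x / sqrt y) t = exp (t / 2 * (ln x - ln y)).
Proof.
  intros Hx Hy.
  rewrite <- sqrt_div_alt, <- Rpower_sqrt, Rpower_mult by (auto; apply Rdiv_lt_0_compat; auto).
  unfold Rpower; rewrite ln_div by auto; f_equal; field.
Qed.

Lemma Ft_phi0_rescaled (t a b : R) :
  Ft t (phi0 a b) = rescaled (fun a b => Ft_scale t (P1 a b) (P2 a b))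
                             (fun a b => Ft_scale t (P2 a b) (P1 a b)) a b.
Proof.
  assert (Hscale : forall p q, 0 <= p -> 0 <= q -> 0 < Rmax p q ->
    Rpower (Rmax 1 (sqrt q) / Rmax (sqrt p) (sqrt q)) t = Ft_scale t p q).
  { intros p q Hp Hq Hpq.
    rewrite <- sqrt_1 at 1; rewrite !Rmax_sqrt, Rpower_sqrt_div; try lra; auto.
    apply Rlt_le_trans with 1; [lra | apply Rmax_l]. }
  unfold Ft; change (Cmod (fst (phi0 a b))) with (sqrt (P1 a b));
    change (Cmod (snd (phi0 a b))) with (sqrt (P2 a b)).
  rewrite Hscale, (Rmax_comm (sqrt (P1 a b))), Hscale
    by (rewrite ?(Rmax_comm (P2 a b)); auto using P1_nonneg, P2_nonneg, Rmax_P1_P2_pos).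
  unfold rescaled, phi0, Cmult, RtoC; simpl; f_equal; f_equal; ring.
Qed.

Lemma pullback_Ft_on_chamber (t u v a1 b1 a2 b2 : R) (Q : R -> R -> Prop) :
  near_axes Q u v ->
  (forall a b, Q a b -> Ft_scale t (P1 a b) (P2 a b) = monomial a1 b1 a b /\
                        Ft_scale t (P2 a b) (P1 a b) = monomial a2 b2 a b) ->
  0 < P1 u v -> 0 < P2 u v ->
  pullback_coeff (fun a b => Ft t (phi0 a b)) u v =
  fs_density (P1 u v) (P2 u v) u (monomial a1 b1 u v) (monomial a2 b2 u v) a1 b1 a2 b2.
Proof.
  intros HQ Hscale H1 H2.
  rewrite <- pullback_coeff_rescaled_monomial by assumption.
  apply pullback_coeff_ext_near; revert HQ; apply near_axes_imp.
  intros a b Hab; destruct (Hscale a b Hab) as [E1 E2].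
  rewrite Ft_phi0_rescaled; unfold rescaled; rewrite E1, E2; reflexivity.
Qed.

(** * Estimates of the density *)

Definition within_factor (c x y : R) : Prop := / c * y <= x <= c * y.

Lemma within_factor_of_bounds (c B N N0 : R) : 0 < c -> 0 < N -> 0 < N0 ->
  3 * N ^ 2 <= c * (B * N0 ^ 2) -> B * N0 ^ 2 <= 3 * c * N ^ 2 ->
  within_factor c (2 / N ^ 2 * B) (6 / N0 ^ 2).
Proof.
  intros Hc HN HN0 Hlo Hhi; unfold within_factor.
  assert (0 < N ^ 2) by (apply pow_lt; lra).
  assert (0 < N0 ^ 2) by (apply pow_lt; lra).
  split.
  - replace (/ c * (6 / N0 ^ 2)) with (2 / N ^ 2 * (3 * N ^ 2 / (c * N0 ^ 2))) by (field; lra).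
    apply Rmult_le_compat_l; [apply Rlt_le, Rdiv_lt_0_compat; lra|].
    apply Rle_div_l; [apply Rmult_lt_0_compat; lra | lra].
  - replace (c * (6 / N0 ^ 2)) with (2 / N ^ 2 * (3 * c * N ^ 2 / N0 ^ 2)) by (field; lra).
    apply Rmult_le_compat_l; [apply Rlt_le, Rdiv_lt_0_compat; lra|].
    apply Rle_div_r; lra.
Qed.

Lemma fs_density_swap (p1 p2 u g1 g2 a1 b1 a2 b2 : R) :
  p1 = p2 + 2 * u + 1 -> 0 < p1 -> 0 < p2 ->
  fs_density p1 p2 u g1 g2 a1 b1 a2 b2 = fs_density p2 p1 (-1 - u) g2 g1 b2 a2 b1 a1.
Proof.
  intros -> H1 H2; unfold fs_density.
  pose proof (pow2_ge_0 g1); pose proof (pow2_ge_0 g2).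
  field; repeat split; nra.
Qed.

Lemma fs_density_within_edge (p1 p2 u t g : R) :
  p1 = p2 + 2 * u + 1 -> u ^ 2 <= p2 -> 1 < p2 < p1 -> 0 <= t <= 1 ->
  p2 / p1 <= g ^ 2 <= 1 ->
  within_factor 12 (fs_density p1 p2 u g 1 (- t / 2) (t / 2) 0 0) (6 / (1 + p1 + p2) ^ 2).
Proof.
  intros hp hu [h2 h21] ht [hg1 hg2].
  set (q := (u + p2) / p2).
  assert (hq : q * p2 = u + p2) by (unfold q; field; lra).
  assert (hu' : - p2 < u < p2) by (split; nra).
  assert (hq' : 0 <= q <= 2) by (split; nra).
  replace (fs_density p1 p2 u g 1 (- t / 2) (t / 2) 0 0)
    with (2 / (1 + g ^ 2 * p1 + p2) ^ 2 * (1 + g ^ 2 * (2 - 2 * t + t * q)))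
    by (unfold fs_density, q; field; pose proof (pow2_ge_0 g); repeat split; nra).
  set (G := g ^ 2) in *.
  assert (hG : p2 <= G * p1) by (apply (Rle_div_l p2 G p1); lra).
  assert (hG0 : 0 <= G) by (pose proof (pow2_ge_0 g); assumption).
  assert (hx : 0 <= 2 - 2 * t + t * q <= 2) by (split; nra).
  assert (hB : 1 <= 1 + G * (2 - 2 * t + t * q) <= 3) by (split; nra).
  assert (hN : 1 + G * p1 + p2 <= 1 + p1 + p2 <= 3 * (1 + G * p1 + p2)) by (split; nra).
  set (B := 1 + G * (2 - 2 * t + t * q)) in *.
  set (N := 1 + G * p1 + p2) in *; set (N0 := 1 + p1 + p2) in *.
  assert (hN0 : 0 < N) by (unfold N; nra).
  assert (hN2 : N ^ 2 <= N0 ^ 2 <= 9 * N ^ 2) by (split; nra).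
  pose proof (pow2_ge_0 N0).
  apply within_factor_of_bounds; nra.
Qed.

Lemma fs_density_within_between (p1 p2 u t g : R) :
  p1 = p2 + 2 * u + 1 -> u ^ 2 <= p2 -> p2 < 1 < p1 -> 0 <= t <= 1 ->
  1 / p1 <= g ^ 2 <= 1 ->
  within_factor 12 (fs_density p1 p2 u g 1 (- t / 2) 0 0 0) (6 / (1 + p1 + p2) ^ 2).
Proof.
  intros hp hu [h2 h1] ht [hg1 hg2].
  assert (hp2 : 0 < p2) by nra.
  replace (fs_density p1 p2 u g 1 (- t / 2) 0 0 0)
    with (2 / (1 + g ^ 2 * p1 + p2) ^ 2 * (1 + g ^ 2 * (2 - t + t * u)))
    by (unfold fs_density; field; pose proof (pow2_ge_0 g); repeat split; nra).
  set (G := g ^ 2) in *.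
  assert (hG : 1 <= G * p1) by (apply (Rle_div_l 1 G p1); lra).
  assert (hG0 : 0 <= G) by (pose proof (pow2_ge_0 g); assumption).
  assert (hx : 0 <= 2 - t + t * u <= 2) by (split; nra).
  assert (hB : 1 <= 1 + G * (2 - t + t * u) <= 3) by (split; nra).
  assert (hN : 1 + G * p1 + p2 <= 1 + p1 + p2 <= 3 * (1 + G * p1 + p2)) by (split; nra).
  set (B := 1 + G * (2 - t + t * u)) in *.
  set (N := 1 + G * p1 + p2) in *; set (N0 := 1 + p1 + p2) in *.
  assert (hN0 : 0 < N) by (unfold N; nra).
  assert (hN2 : N ^ 2 <= N0 ^ 2 <= 9 * N ^ 2) by (split; nra).
  pose proof (pow2_ge_0 N0).
  apply within_factor_of_bounds; nra.
Qed.

Lemma fs_density_within_inner (p1 p2 u t g : R) :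
  p1 = p2 + 2 * u + 1 -> u ^ 2 <= p2 -> p2 < p1 < 1 -> 0 <= t <= 1 ->
  1 <= g ^ 2 <= 1 / p1 ->
  within_factor 12 (fs_density p1 p2 u g g (- t / 2) 0 (- t / 2) 0) (6 / (1 + p1 + p2) ^ 2).
Proof.
  intros hp hu [h21 h1] ht [hg1 hg2].
  assert (hp2 : 0 < p2) by nra.
  assert (hp1 : 1 / 4 < p1) by nra.
  set (r := (u + p2) / p1).
  assert (hr : r * p1 = u + p2) by (unfold r; field; lra).
  assert (hr' : -1 <= r <= 1) by (split; nra).
  replace (fs_density p1 p2 u g g (- t / 2) 0 (- t / 2) 0)
    with (2 / (1 + g ^ 2 * (p1 + p2)) ^ 2 * (g ^ 2 * (2 - t - t * r) + g ^ 2 * g ^ 2))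
    by (unfold fs_density, r; field; pose proof (pow2_ge_0 g); repeat split; nra).
  set (G := g ^ 2) in *.
  assert (hG : G * p1 <= 1) by (apply (Rle_div_r G 1 p1); lra).
  assert (hG4 : G <= 4) by nra.
  assert (hx : 0 <= 2 - t - t * r <= 3) by (split; nra).
  assert (hB : G * G <= G * (2 - t - t * r) + G * G <= 28) by (split; nra).
  set (B := G * (2 - t - t * r) + G * G) in *.
  set (N := 1 + G * (p1 + p2)) in *; set (N0 := 1 + p1 + p2) in *.
  assert (hN : N0 <= N <= G * N0) by (unfold N, N0; split; nra).
  assert (hN00 : 0 < N0) by (unfold N0; lra).
  assert (hN2 : N0 ^ 2 <= N ^ 2 <= (G * G) * N0 ^ 2) by (split; nra).
  apply within_factor_of_bounds; nra.
Qed.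

Lemma exp_le_exp (x y : R) : x <= y -> exp x <= exp y.
Proof. intros [H | ->]; [left; apply exp_increasing | right]; auto. Qed.

Lemma ln_le_ln (x y : R) : 0 < x <= y -> ln x <= ln y.
Proof. intros [Hx [H | ->]]; [left; apply ln_increasing | right]; auto. Qed.

Lemma exp_ln_div (x y : R) : 0 < x -> 0 < y -> exp (ln x - ln y) = x / y.
Proof. intros; rewrite <- ln_div, exp_ln; auto; apply Rdiv_lt_0_compat; auto. Qed.

Lemma monomial_sqr (a b u v : R) :
  monomial a b u v ^ 2 = exp (2 * a * ln (P1 u v) + 2 * b * ln (P2 u v)).
Proof. unfold monomial; simpl; rewrite Rmult_1_r, <- exp_plus; f_equal; ring. Qed.

Lemma monomial_sqr_le (t x y a b u v : R) : 0 <= t <= 1 -> 0 < x <= y ->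
  2 * a * ln (P1 u v) + 2 * b * ln (P2 u v) = t * (ln x - ln y) ->
  x / y <= monomial a b u v ^ 2 <= 1.
Proof.
  intros ht Hxy E; rewrite monomial_sqr, E, <- exp_ln_div, <- exp_0 by lra.
  assert (ln x - ln y <= 0) by (pose proof (ln_le_ln x y Hxy); lra).
  split; apply exp_le_exp; nra.
Qed.

Lemma monomial_sqr_ge (t x y a b u v : R) : 0 <= t <= 1 -> 0 < y <= x ->
  2 * a * ln (P1 u v) + 2 * b * ln (P2 u v) = t * (ln x - ln y) ->
  1 <= monomial a b u v ^ 2 <= x / y.
Proof.
  intros ht Hxy E; rewrite monomial_sqr, E, <- exp_ln_div, <- exp_0 by lra.
  assert (0 <= ln x - ln y) by (pose proof (ln_le_ln y x Hxy); lra).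
  split; apply exp_le_exp; nra.
Qed.

Definition Ft_pullback_within (c t u v : R) : Prop :=
  within_factor c (pullback_coeff (fun a b => Ft t (phi0 a b)) u v) (pullback_coeff phi0 u v).

Ltac chamber_side :=
  match goal with
  | |- near_axes _ _ _ =>
      apply near_axes_lt_chain;
        [ .. | cbv beta; split; lra];
        first [apply axis_continuous_const | apply axis_continuous_P1 | apply axis_continuous_P2]
  | |- forall a b, _ -> _ =>
      intros a b [? ?]; unfold Ft_scale, monomial;
      repeat ((rewrite Rmax_left by lra) || (rewrite Rmax_right by lra));
      rewrite ?ln_1; split; f_equal; field
  | _ => assumption
  end.

Section Chambers.

Variables t u v : R.
Hypotheses (ht : 0 <= t <= 1) (hP1 : 0 < P1 u v) (hP2 : 0 < P2 u v).

Lemma Ft_pullback_within_1_P2_P1 : 1 < P2 u v < P1 u v -> Ft_pullback_within 12 t u v.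
Proof.
  intros [h2 h21]; unfold Ft_pullback_within.
  rewrite pullback_coeff_phi0, (pullback_Ft_on_chamber t u v (- t / 2) (t / 2) 0 0
    (fun a b => 1 < P2 a b < P1 a b)) by chamber_side.
  rewrite monomial_0; apply fs_density_within_edge; auto using P1_eq, sqr_le_P2.
  apply (monomial_sqr_le t); [assumption | lra | field].
Qed.

Lemma Ft_pullback_within_1_P1_P2 : 1 < P1 u v < P2 u v -> Ft_pullback_within 12 t u v.
Proof.
  intros [h1 h12]; unfold Ft_pullback_within.
  rewrite pullback_coeff_phi0, (pullback_Ft_on_chamber t u v 0 0 (t / 2) (- t / 2)
    (fun a b => 1 < P1 a b < P2 a b)) by chamber_side.
  rewrite fs_density_swap, monomial_0 by auto using P1_eq.
  replace (1 + P1 u v + P2 u v) with (1 + P2 u v + P1 u v) by ring.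
  apply fs_density_within_edge; auto using P2_eq, sqr_le_P1.
  apply (monomial_sqr_le t); [assumption | lra | field].
Qed.

Lemma Ft_pullback_within_P2_1_P1 : P2 u v < 1 < P1 u v -> Ft_pullback_within 12 t u v.
Proof.
  intros [h2 h1]; unfold Ft_pullback_within.
  rewrite pullback_coeff_phi0, (pullback_Ft_on_chamber t u v (- t / 2) 0 0 0
    (fun a b => P2 a b < 1 < P1 a b)) by chamber_side.
  rewrite monomial_0; apply fs_density_within_between; auto using P1_eq, sqr_le_P2.
  apply (monomial_sqr_le t); [assumption | lra | rewrite ln_1; field].
Qed.

Lemma Ft_pullback_within_P1_1_P2 : P1 u v < 1 < P2 u v -> Ft_pullback_within 12 t u v.
Proof.
  intros [h1 h2]; unfold Ft_pullback_within.
  rewrite pullback_coeff_phi0, (pullback_Ft_on_chamber t u v 0 0 0 (- t / 2)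
    (fun a b => P1 a b < 1 < P2 a b)) by chamber_side.
  rewrite fs_density_swap, monomial_0 by auto using P1_eq.
  replace (1 + P1 u v + P2 u v) with (1 + P2 u v + P1 u v) by ring.
  apply fs_density_within_between; auto using P2_eq, sqr_le_P1.
  apply (monomial_sqr_le t); [assumption | lra | rewrite ln_1; field].
Qed.

Lemma Ft_pullback_within_P2_P1_1 : P2 u v < P1 u v < 1 -> Ft_pullback_within 12 t u v.
Proof.
  intros [h21 h1]; unfold Ft_pullback_within.
  rewrite pullback_coeff_phi0, (pullback_Ft_on_chamber t u v (- t / 2) 0 (- t / 2) 0
    (fun a b => P2 a b < P1 a b < 1)) by chamber_side.
  apply fs_density_within_inner; auto using P1_eq, sqr_le_P2.
  apply (monomial_sqr_ge t); [assumption | lra | rewrite ln_1; field].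
Qed.

Lemma Ft_pullback_within_P1_P2_1 : P1 u v < P2 u v < 1 -> Ft_pullback_within 12 t u v.
Proof.
  intros [h12 h2]; unfold Ft_pullback_within.
  rewrite pullback_coeff_phi0, (pullback_Ft_on_chamber t u v 0 (- t / 2) 0 (- t / 2)
    (fun a b => P1 a b < P2 a b < 1)) by chamber_side.
  rewrite fs_density_swap by auto using P1_eq.
  replace (1 + P1 u v + P2 u v) with (1 + P2 u v + P1 u v) by ring.
  apply fs_density_within_inner; auto using P2_eq, sqr_le_P1.
  apply (monomial_sqr_ge t); [assumption | lra | rewrite ln_1; field].
Qed.

End Chambers.

Lemma Ft_pullback_within_nonsing (t u v : R) : 0 <= t <= 1 -> nonsing (phi0 u v) ->
  Ft_pullback_within 12 t u v.
Proof.
  intros ht Hn; destruct (nonsing_phi0 u v Hn) as (n1 & n2 & n12).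
  pose proof (P1_pos u v n2); pose proof (P2_pos u v n1).
  destruct (Rdichotomy _ _ n1), (Rdichotomy _ _ n2), (Rdichotomy _ _ n12).
  - apply Ft_pullback_within_P1_P2_1; auto.
  - apply Ft_pullback_within_P2_P1_1; auto.
  - apply Ft_pullback_within_P1_1_P2; auto.
  - lra.
  - lra.
  - apply Ft_pullback_within_P2_1_P1; auto.
  - apply Ft_pullback_within_1_P1_P2; auto.
  - apply Ft_pullback_within_1_P2_P1; auto.
Qed.

Theorem lemma4p1 :
  exists c : R, 1 < c /\
    (forall t u v : R, 0 <= t <= 1 -> nonsing (phi0 u v) ->
       / c * pullback_coeff phi0 u v
         <= pullback_coeff (fun a b => Ft t (phi0 a b)) u v
         <= c * pullback_coeff phi0 u v) /\
    (forall t u v : R, 0 <= t <= 1 -> nonsing (phi0 u v) ->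
       pullback_coeff (fun a b => Ft t (phi0 a b)) u v <> 0).
Proof.
  exists 12; split; [lra | split].
  - exact Ft_pullback_within_nonsing.
  - intros t u v ht Hn.
    destruct (Ft_pullback_within_nonsing t u v ht Hn) as [Hlo _].
    pose proof (pullback_coeff_phi0_pos u v Hn); lra.
Qed.
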